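(* Let $\vec B=(b_0,\dots,b_{N-1})$ be a binary digit vector and let $\overleftarrow{B}$ be its reverse, $\overleftarrow{B}(n)=b_{N-1-n}$ for $n=0,\dots,N-1$. Then for all $x\in[0,1]$, $$F_{\overleftarrow{B}}(x)=1-F_{\vec B}(1-x).$$
   Context: A binary digit vector of length (scale factor) $N\ge3$ is $\vec B=(b_0,\dots,b_{N-1})\in\{0,1\}^N$ with $2\le\|\vec B\|:=\sum_i b_i\le N-1$; its digit set is $D=\{i:b_i=1\}$. With $\phi_d(x)=(x+d)/N$ for $d\in D$, let $\mu_{\vec B}$ be the unique Borel probability measure with $\mu_{\vec B}=\frac{1}{\|\vec B\|}\sum_{d\in D}\mu_{\vec B}\circ\phi_d^{-1}$, supported on the attractor $C_{\vec B}\subset[0,1]$. The CDF is $F_{\vec B}(x)=\mu_{\vec B}([0,x])$, $x\in[0,1]$. *)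

From HB Require Import structures.
From mathcomp Require Import all_boot all_order all_algebra.
From mathcomp Require Import all_classical all_reals all_analysis.
Set Implicit Arguments. Unset Strict Implicit. Unset Printing Implicit Defensive.
Import Order.TTheory GRing.Theory Num.Theory.
Local Open Scope classical_set_scope.
Local Open Scope ring_scope.

(* A binary digit vector of length N : b : 'I_N -> bool, b i = true iff b_i = 1.
   Digit set D = {i | b i}, ||B|| = #|D|. *)
Definition digit_count (N : nat) (b : 'I_N -> bool) : nat := #|[pred i | b i]|.

Definition is_digit_vector (N : nat) (b : 'I_N -> bool) : Prop :=
  (3 <= N)%N /\ (2 <= digit_count b)%N /\ (digit_count b <= N.-1)%N.

Definition rev_digits (N : nat) (b : 'I_N -> bool) : 'I_N -> bool :=
  fun i => b (rev_ord i).

Definition phi_map (R : realType) (N : nat) (d : 'I_N) (x : R) : R :=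
  (x + (d : nat)%:R) / N%:R.

Definition self_similar (R : realType) (N : nat) (b : 'I_N -> bool)
  (mu : probability R R) : Prop :=
  forall A : set R, measurable A ->
    mu A = (((digit_count b)%:R^-1 : R)%:E *
           \sum_(d < N | b d) mu (@phi_map R N d @^-1` A))%E.

Definition cdf_mu (R : realType) (mu : probability R R) (x : R) : R :=
  fine (mu `[0, x]%classic).

From HB Require Import structures.
From mathcomp Require Import all_boot all_order all_algebra.
From mathcomp Require Import all_classical all_reals all_analysis.
From mathcomp Require Import ring lra zify.
Set Implicit Arguments. Unset Strict Implicit. Unset Printing Implicit Defensive.
Import Order.TTheory GRing.Theory Num.Theory numFieldNormedType.Exports.
Local Open Scope classical_set_scope.
Local Open Scope ring_scope.

(* Write F(x) = mu(]-oo, x]) and G(x) = nu(]-oo, x]), and k for the number of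
   digits.  Self-similarity reads F(x) = k^-1 sum_(d in D) F(N x - d), whence
   F(x) <= F(N x); as F tends to 0 at -oo and to 1 at +oo, this forces F = 0 on
   ]-oo, 0[ and F = 1 on ]1, +oo[; then F(0) = 0 and F(1) = 1, because only
   one digit contributes to the equation at 0 and at 1.
   The defect E(x) = G(x) + F(1 - x) - 1 satisfies the self-similarity equation
   of the reversed digits, because d |-> N - 1 - d exchanges the digits of B and
   of its reverse, and E vanishes outside ]0, 1[.  For each x at most one of the
   points N x - d lies in ]0, 1[, so sup |E| <= sup |E| / k with k >= 2, and
   E = 0.  Finally F(x) = mu([0, x]) for x >= 0 since mu(]-oo, 0[) = 0. *)

Lemma natr_eq_of_dist_lt1 (R : realDomainType) (m n : nat) :
  `|m%:R - n%:R : R| < 1 -> m = n.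
Proof.
rewrite ltr_norml => /andP[lo hi].
case: (ltngtP m n) => // [mn|nm]; exfalso.
  by move: mn; rewrite -(ler_nat R) -natr1; lra.
by move: nm; rewrite -(ler_nat R) -natr1; lra.
Qed.

Lemma norm_sum_le_single_support (R : numDomainType) (I : finType)
    (P : pred I) (F : I -> R) (B : R) :
  {in P &, forall i j, F i != 0 -> F j != 0 -> i = j} ->
  (forall i, P i -> `|F i| <= B) -> 0 <= B ->
  `|\sum_(i | P i) F i| <= B.
Proof.
move=> single FB B_ge0.
case: (pickP [pred i | P i && (F i != 0)]) => [i /andP[Pi Fi] | F0]; last first.
  by rewrite big1 ?normr0 // => j Pj; move: (F0 j); rewrite /= Pj => /negbFE/eqP.
rewrite (bigD1 i) //= big1 ?addr0 ?FB // => j /andP[Pj ji].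
by apply/eqP/negP => /negP Fj; move/eqP: ji; apply; apply: single.
Qed.

Lemma eq0_of_halving_bound (R : archiRealFieldType) (T : Type) (f : T -> R) :
  (forall y, `|f y| <= 1) ->
  (forall B, (forall y, `|f y| <= B) -> forall y, `|f y| <= B / 2) ->
  forall y, f y = 0.
Proof.
move=> f_le1 halve.
have bound n y : `|f y| <= n.+1%:R^-1.
  elim: n y => [|n IH] y; first by rewrite invr1.
  apply: le_trans (halve _ IH y) _.
  rewrite -invfM lef_pV2 ?posrE ?mulr_gt0 ?ltr0n // -natrM ler_nat.
  by rewrite muln2 -addnn addSn ltnS leq_addl.
move=> y; apply/normr0_eq0/le_anti; rewrite normr_ge0 andbT.
rewrite leNgt; apply/negP => fy_gt0.
have := truncnS_gt (`|f y|^-1); rewrite invf_plt ?posrE ?ltr0n //.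
by rewrite ltNge bound.
Qed.

Lemma natrX_mul_unbounded (R : archiRealFieldType) (N : nat) (x y : R) :
  (1 < N)%N -> 0 < x -> exists n, y <= N%:R ^+ n * x.
Proof.
move=> N_gt1 x_gt0; exists (Num.truncn (`|y| / x)).
have := truncnS_gt (`|y| / x); rewrite ltr_pdivrMr // => y_lt.
have : (Num.truncn (`|y| / x)).+1%:R <= N%:R ^+ Num.truncn (`|y| / x) :> R.
  by rewrite -natrX ler_nat ltn_expl.
have := ler_norm y; nra.
Qed.

Lemma eq0_of_le_invn_mul (R : realFieldType) (k : nat) (y : R) :
  (2 <= k)%N -> 0 <= y -> y <= k%:R^-1 * y -> y = 0.
Proof.
move=> k_ge2 y_ge0; have k_ge2' : (2 : R) <= k%:R by rewrite ler_nat.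
rewrite ler_pdivlMl; last by apply: lt_le_trans k_ge2'.
by move=> ky_le; apply/le_anti; rewrite y_ge0 andbT; nra.
Qed.

Section distribution_function.
Variables (R : realType) (mu : probability R R).

Definition distr_fun (x : R) : R := fine (mu `]-oo, x]%classic).

Let idR : R -> R := idfun.
HB.instance Definition _ :=
  @isMeasurableFun.Build _ _ _ _ idR (@measurable_id _ _ setT).

Let distr_fun_cdf : distr_fun = fine \o cdf (idR : {RV mu >-> R}).
Proof.
by apply/funext => x; rewrite /= /cdf /distribution /pushforward preimage_id.
Qed.

Lemma distr_funE x : (distr_fun x)%:E = mu `]-oo, x]%classic.
Proof. by rewrite fineK ?fin_num_measure. Qed.

Lemma distr_fun_ge0 x : 0 <= distr_fun x.
Proof. exact: fine_ge0. Qed.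

Lemma distr_fun_le1 x : distr_fun x <= 1.
Proof. by rewrite -lee_fin distr_funE probability_le1. Qed.

Lemma distr_fun_nondecreasing : {homo distr_fun : x y / x <= y}.
Proof.
move=> x y xy; rewrite -lee_fin !distr_funE.
by rewrite le_measure ?inE //; apply: subitvPr; rewrite bnd_simp.
Qed.

Lemma cvg_distr_funNy0 : distr_fun x @[x --> -oo%R] --> 0.
Proof.
by rewrite distr_fun_cdf; exact/fine_cvg/cvg_cdfNy0.
Qed.

Lemma cvg_distr_funy1 : distr_fun x @[x --> +oo%R] --> (1 : R).
Proof.
by rewrite distr_fun_cdf; exact/fine_cvg/cvg_cdfy1.
Qed.

Lemma distr_fun_eq0_of_lb x :
  (forall y, distr_fun x <= distr_fun y) -> distr_fun x = 0.
Proof.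
move=> lb; apply/le_anti; rewrite distr_fun_ge0 andbT.
rewrite -(cvg_lim _ cvg_distr_funNy0) //.
by apply: limr_ge; [exact: cvgP cvg_distr_funNy0 | exact: nearW].
Qed.

Lemma distr_fun_eq1_of_ub x :
  (forall y, distr_fun y <= distr_fun x) -> distr_fun x = 1.
Proof.
move=> ub; apply/le_anti; rewrite distr_fun_le1 /=.
rewrite -(cvg_lim _ cvg_distr_funy1) //.
by apply: limr_le; [exact: cvgP cvg_distr_funy1 | exact: nearW].
Qed.

Lemma cdf_mu_distr_fun x : 0 <= x -> distr_fun 0 = 0 -> cdf_mu mu x = distr_fun x.
Proof.
move=> x_ge0 F0; rewrite /cdf_mu /distr_fun.
rewrite (@itv_bndbnd_setU _ _ -oo%O (BLeft 0) (BRight x)) ?bnd_simp // measureU //; last first.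
  apply/seteqP; split => // y /=; rewrite !in_itv /= => -[y_lt0 /andP[y_ge0 _]].
  by move: (lt_le_trans y_lt0 y_ge0); rewrite ltxx.
rewrite [X in fine (X + _)%E](_ : _ = 0%E) ?add0e //.
apply/le_anti; rewrite measure_ge0 andbT.
have <- : mu `]-oo, 0]%classic = 0%E by rewrite -distr_funE F0.
by rewrite le_measure ?inE //; apply: subitvPr; rewrite bnd_simp.
Qed.

End distribution_function.

Lemma phi_map_preimage_ray (R : realType) (N : nat) (d : 'I_N) (x : R) :
  (0 < N)%N ->
  @phi_map R N d @^-1` `]-oo, x] = `]-oo, N%:R * x - d%:R]%classic.
Proof.
move=> N_gt0; apply/seteqP; split => y /=; rewrite !in_itv /= /phi_map;
  by rewrite ler_pdivrMr ?ltr0n // lerBrDr mulrC.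
Qed.

Lemma sum_digits_const (R : nzSemiRingType) (N : nat) (b : 'I_N -> bool) (c : R) :
  \sum_(d < N | b d) c = (digit_count b)%:R * c.
Proof. by rewrite sumr_const mulr_natl. Qed.

Lemma digit_count_rev (N : nat) (b : 'I_N -> bool) :
  digit_count (rev_digits b) = digit_count b.
Proof. by rewrite /digit_count -!sum1_card [in RHS](reindex_inj rev_ord_inj). Qed.

Section self_similar_distribution.
Variables (R : realType) (N : nat) (b : 'I_N -> bool) (mu : probability R R).
Hypotheses (N_gt1 : (1 < N)%N) (count_ge2 : (2 <= digit_count b)%N).
Hypothesis mu_ss : self_similar b mu.

Local Notation k := (digit_count b).
Local Notation F := (distr_fun mu).

Let N_gt0 : (0 < N)%N. Proof. exact: ltnW. Qed.
Let k_neq0 : k%:R != 0 :> R. Proof. by rewrite pnatr_eq0 -lt0n (leq_trans _ count_ge2). Qed.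

Lemma distr_fun_self_similar x :
  F x = k%:R^-1 * \sum_(d < N | b d) F (N%:R * x - d%:R).
Proof.
apply/EFin_inj; rewrite distr_funE mu_ss ?EFinM -?sumEFin; last exact: measurable_itv.
by congr (_ * _)%E; apply: eq_bigr => d _; rewrite phi_map_preimage_ray // distr_funE.
Qed.

Lemma distr_fun_le_scale x : F x <= F (N%:R * x).
Proof.
rewrite distr_fun_self_similar ler_pdivrMl ?lt0r ?k_neq0 ?ler0n //= -sum_digits_const.
by apply: ler_sum => d _; apply: distr_fun_nondecreasing; rewrite lerBlDr lerDl.
Qed.

Lemma distr_fun_scale_le t : F (1 + N%:R * t) <= F (1 + t).
Proof.
rewrite [leRHS]distr_fun_self_similar ler_pdivlMl ?lt0r ?k_neq0 ?ler0n //= -sum_digits_const.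
apply: ler_sum => d _; apply: distr_fun_nondecreasing.
have : (d.+1%:R <= N%:R :> R) by rewrite ler_nat.
rewrite -natr1; lra.
Qed.

Lemma distr_fun_lt0 x : x < 0 -> F x = 0.
Proof.
move=> x_lt0; apply: distr_fun_eq0_of_lb => y.
have [n y_le] : exists n, - y <= N%:R ^+ n * - x.
  by apply: natrX_mul_unbounded; rewrite ?oppr_gt0.
have iter m : F x <= F (N%:R ^+ m * x).
  elim: m => [|m IH]; first by rewrite expr0 mul1r.
  by rewrite exprS -mulrA; apply: le_trans IH (distr_fun_le_scale _).
by apply: le_trans (iter n) _; apply: distr_fun_nondecreasing; lra.
Qed.

Lemma distr_fun_gt1 t : 0 < t -> F (1 + t) = 1.
Proof.
move=> t_gt0; apply: distr_fun_eq1_of_ub => y.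
have [n y_le] := natrX_mul_unbounded (y - 1) N_gt1 t_gt0.
have iter m : F (1 + N%:R ^+ m * t) <= F (1 + t).
  elim: m => [|m IH]; first by rewrite expr0 mul1r.
  by rewrite exprS -mulrA; apply: le_trans (distr_fun_scale_le _) IH.
by apply: le_trans (iter n); apply: distr_fun_nondecreasing; lra.
Qed.

Lemma distr_fun0 : F 0 = 0.
Proof.
apply: (eq0_of_le_invn_mul count_ge2 (distr_fun_ge0 _ _)).
rewrite [leLHS]distr_fun_self_similar ler_wpM2l ?invr_ge0 ?ler0n //.
apply: le_trans (ler_norm _) _; apply: norm_sum_le_single_support.
- have nz (e : 'I_N) : F (N%:R * 0 - e%:R) != 0 -> e = 0 :> nat.
    case: (posnP e) => // e_gt0.
    by rewrite distr_fun_lt0 ?eqxx // mulr0 sub0r oppr_lt0 ltr0n.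
  by move=> d d' _ _ /nz d0 /nz d'0; apply: val_inj; rewrite /= d0 d'0.
- move=> d _; rewrite ger0_norm ?distr_fun_ge0 //.
  by apply: distr_fun_nondecreasing; rewrite mulr0 sub0r oppr_le0.
- exact: distr_fun_ge0.
Qed.

Lemma distr_fun1 : F 1 = 1.
Proof.
apply/eqP; rewrite eq_sym -subr_eq0; apply/eqP.
have F1_le1 : 0 <= 1 - F 1 by rewrite subr_ge0 distr_fun_le1.
apply: (eq0_of_le_invn_mul count_ge2 F1_le1).
have {1}-> : 1 - F 1 = k%:R^-1 * \sum_(d < N | b d) (1 - F (N%:R * 1 - d%:R)).
  by rewrite sumrB sum_digits_const mulrBr -distr_fun_self_similar mulKf.
rewrite ler_wpM2l ?invr_ge0 ?ler0n //.
apply: le_trans (ler_norm _) _; apply: norm_sum_le_single_support.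
- have nz (e : 'I_N) : 1 - F (N%:R * 1 - e%:R) != 0 -> e = N.-1 :> nat.
    case: (ltnP e.+1 N) => [e_lt | e_ge] ne0; last by have := ltn_ord e; lia.
    move: ne0; rewrite mulr1 (_ : N%:R - e%:R = 1 + (N - e.+1)%:R).
      by rewrite distr_fun_gt1 ?subrr ?eqxx // ltr0n subn_gt0.
    by rewrite natrB // -natr1; lra.
  by move=> d d' _ _ /nz d0 /nz d'0; apply: val_inj; rewrite /= d0 d'0.
- move=> d _; rewrite ger0_norm ?subr_ge0 ?distr_fun_le1 // lerD2l lerN2.
  apply: distr_fun_nondecreasing.
  have : (d.+1%:R <= N%:R :> R) by rewrite ler_nat.
  rewrite -natr1; lra.
- by rewrite subr_ge0 distr_fun_le1.
Qed.

Lemma distr_fun_le0 x : x <= 0 -> F x = 0.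
Proof.
by rewrite le_eqVlt => /predU1P[->|/distr_fun_lt0]; [exact: distr_fun0|].
Qed.

Lemma distr_fun_ge1 x : 1 <= x -> F x = 1.
Proof.
rewrite le_eqVlt => /predU1P[<-|x_gt1]; first exact: distr_fun1.
by rewrite -(subrKC 1 x) distr_fun_gt1 // subr_gt0.
Qed.

End self_similar_distribution.

Section reflection.
Variables (R : realType) (N : nat) (b : 'I_N -> bool) (mu nu : probability R R).
Hypotheses (N_gt1 : (1 < N)%N) (count_ge2 : (2 <= digit_count b)%N).
Hypotheses (mu_ss : self_similar b mu) (nu_ss : self_similar (rev_digits b) nu).

Local Notation k := (digit_count b).

Definition reflection_defect (x : R) : R :=
  distr_fun nu x + distr_fun mu (1 - x) - 1.

Local Notation E := reflection_defect.

Let count_rev_ge2 : (2 <= digit_count (rev_digits b))%N.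
Proof. by rewrite digit_count_rev. Qed.

Lemma reflection_defect_self_similar x :
  E x = k%:R^-1 * \sum_(d < N | rev_digits b d) E (N%:R * x - d%:R).
Proof.
have k_neq0 : k%:R != 0 :> R by rewrite pnatr_eq0 -lt0n (leq_trans _ count_ge2).
have mu_rev : distr_fun mu (1 - x) =
    k%:R^-1 * \sum_(d < N | rev_digits b d) distr_fun mu (1 - (N%:R * x - d%:R)).
  rewrite (distr_fun_self_similar N_gt1 mu_ss) (reindex_inj rev_ord_inj) /=.
  congr (_ * _); apply: eq_bigr => d _; congr (distr_fun mu _).
  by rewrite natrB // -natr1; ring.
rewrite /E (distr_fun_self_similar N_gt1 nu_ss) mu_rev digit_count_rev.
rewrite !sumrB big_split /= sum_digits_const digit_count_rev.
by rewrite mulr1 mulrBr mulrDr mulVf.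
Qed.

Lemma reflection_defect_support x : E x != 0 -> 0 < x < 1.
Proof.
move=> E_neq0; apply/andP; split; rewrite ltNge; apply: contra E_neq0 => x_out.
  rewrite /E (distr_fun_le0 N_gt1 count_rev_ge2 nu_ss x_out).
  by rewrite (distr_fun_ge1 N_gt1 count_ge2 mu_ss) ?add0r ?subrr //; lra.
rewrite /E (distr_fun_ge1 N_gt1 count_rev_ge2 nu_ss x_out).
by rewrite (distr_fun_le0 N_gt1 count_ge2 mu_ss) ?addr0 ?subrr //; lra.
Qed.

Lemma norm_reflection_defect_le1 x : `|E x| <= 1.
Proof.
rewrite ler_norml /E.
have := distr_fun_ge0 nu x; have := distr_fun_le1 nu x.
have := distr_fun_ge0 mu (1 - x); have := distr_fun_le1 mu (1 - x).
lra.
Qed.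

Lemma reflection_defect_halve B :
  (forall y, `|E y| <= B) -> forall y, `|E y| <= B / 2.
Proof.
move=> E_le y; have B_ge0 : 0 <= B := le_trans (normr_ge0 _) (E_le y).
have k_gt0 : 0 < k%:R :> R by rewrite ltr0n (leq_trans _ count_ge2).
rewrite reflection_defect_self_similar normrM ger0_norm ?invr_ge0 ?ler0n //.
apply: (@le_trans _ _ (k%:R^-1 * B)).
  rewrite ler_wpM2l ?invr_ge0 ?ler0n //; apply: norm_sum_le_single_support => //.
  move=> d d' _ _ /reflection_defect_support/andP[d_lo d_hi].
  move=> /reflection_defect_support/andP[d'_lo d'_hi].
  apply/val_inj/(natr_eq_of_dist_lt1 (R := R)).
  by rewrite ltr_norml; apply/andP; split; lra.
by rewrite mulrC ler_wpM2l // lef_pV2 ?posrE ?ler_nat.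
Qed.

Lemma reflection_defect_eq0 x : E x = 0.
Proof.
exact: eq0_of_halving_bound norm_reflection_defect_le1 reflection_defect_halve x.
Qed.

End reflection.

Theorem proposition2p5 (R : realType) (N : nat) (b : 'I_N -> bool)
  (mu : probability R R) (nu : probability R R) :
  is_digit_vector b ->
  self_similar b mu ->
  self_similar (rev_digits b) nu ->
  forall x : R, 0 <= x <= 1 -> cdf_mu nu x = 1 - cdf_mu mu (1 - x).
Proof.
move=> [N_ge3 [count_ge2 _]] mu_ss nu_ss x /andP[x_ge0 x_le1].
have N_gt1 : (1 < N)%N by apply: leq_trans N_ge3.
have count_rev_ge2 : (2 <= digit_count (rev_digits b))%N by rewrite digit_count_rev.
rewrite (cdf_mu_distr_fun x_ge0 (distr_fun0 N_gt1 count_rev_ge2 nu_ss)).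
rewrite (cdf_mu_distr_fun _ (distr_fun0 N_gt1 count_ge2 mu_ss)); last by rewrite subr_ge0.
have := reflection_defect_eq0 N_gt1 count_ge2 mu_ss nu_ss x.
rewrite /reflection_defect; lra.
Qed.
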